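(* Consider a finite set of flows $\mathcal K$, each flow $k$ with rate $r_k>0$ associated to a beam $v_k\in V$; let $n_v=|\{k:v_k=v\}|$ and assume $n_v\ge1$ for all $v\in V$. The problem $$\text{maximize } \sum_{k\in\mathcal K}\ln(r_k\gamma_{v_k}\delta_k)\quad\text{subject to } \gamma\in\mathrm{conv}(\mathcal Z),\ \delta\in\Delta$$ has the unique optimal solution $\delta^\star_k=1/n_{v_k}$ and $\gamma^\star_v=\kappa^\star_v\prod_{v'\in\mathcal A(v)}(1-\kappa^\star_{v'})$ with $\kappa^\star_v=n_v/\sum_{v'\in\bar{\mathcal D}(v)}n_{v'}$, i.e. $$\gamma^\star_v=\frac{n_v}{\sum_{v'\in\bar{\mathcal D}(v)}n_{v'}}\prod_{v''\in\mathcal A(v)}\frac{\sum_{v'\in\mathcal D(v'')}n_{v'}}{\sum_{v'\in\bar{\mathcal D}(v'')}n_{v'}}.$$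
   Context: $G=(V,E)$ is a finite directed rooted tree with vertex set $V=\{1,\dots,|V|\}$ and root $1$, edges oriented from parent to child. For $v\in V$: $\mathcal A(v)$ is the set of strict ancestors of $v$, $\bar{\mathcal A}(v)=\mathcal A(v)\cup\{v\}$, $\mathcal D(v)$ is the set of strict descendants of $v$, $\bar{\mathcal D}(v)=\mathcal D(v)\cup\{v\}$, and $d(v)$ is the number of children of $v$. $\mathcal Z=\{z\in\{0,1\}^{V}: z_v z_{v'}=0 \text{ for all } v\in V,\ v'\in\mathcal A(v)\}$ and $\mathrm{conv}(\mathcal Z)$ is its convex hull. $\Delta=\{\delta\in[0,1]^{\mathcal K}: \sum_{k: v_k=v}\delta_k=1\ \forall v\in V\}$. *)

From Stdlib Require Import Reals List Arith Bool.
Import ListNotations.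
Open Scope R_scope.

(* Vertices are 0 .. N-1 (the paper's 1 .. |V| shifted by one), root 0.
   The tree is given by a parent map [par]; par 0 is irrelevant. *)
Definition is_rooted_tree (N : nat) (par : nat -> nat) : Prop :=
  (0 < N)%nat /\
  (forall v, (0 < v < N)%nat -> (par v < N)%nat) /\
  (forall v, (v < N)%nat -> exists k, Nat.iter k par v = 0%nat).

(* [ancb N par a v] : a is a strict ancestor of v, i.e. a = par^k v for some
   k >= 1, the upward path not passing through the root before step k.
   (In a tree on N vertices every depth is < N, so k ranges over 1..N.) *)
Definition ancb (N : nat) (par : nat -> nat) (a v : nat) : bool :=
  existsb (fun k => Nat.eqb (Nat.iter k par v) a &&
                    forallb (fun j => negb (Nat.eqb (Nat.iter j par v) 0)) (seq 0 k))
          (seq 1 N).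

Definition ancestors (N : nat) (par : nat -> nat) (v : nat) : list nat :=
  filter (fun a => ancb N par a v) (seq 0 N).
Definition cdescendants (N : nat) (par : nat -> nat) (v : nat) : list nat :=
  filter (fun u => Nat.eqb u v || ancb N par v u) (seq 0 N).

Definition sumR (l : list nat) (f : nat -> R) : R :=
  fold_right (fun i acc => f i + acc) 0 l.
Definition prodR (l : list nat) (f : nat -> R) : R :=
  fold_right (fun i acc => f i * acc) 1 l.

(* Flows are 0 .. K-1; flow k has beam b k. *)
Definition flows_of (K : nat) (b : nat -> nat) (v : nat) : list nat :=
  filter (fun k => Nat.eqb (b k) v) (seq 0 K).
Definition nv (K : nat) (b : nat -> nat) (v : nat) : nat :=
  length (flows_of K b v).

Definition inZ (N : nat) (par : nat -> nat) (z : nat -> bool) : Prop :=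
  forall v a, (v < N)%nat -> (a < N)%nat -> ancb N par a v = true ->
    ~ (z v = true /\ z a = true).

Definition ind (b : bool) : R := if b then 1 else 0.

Definition in_convZ (N : nat) (par : nat -> nat) (gamma : nat -> R) : Prop :=
  exists l : list (R * (nat -> bool)),
    Forall (fun p => 0 <= fst p /\ inZ N par (snd p)) l /\
    fold_right (fun p acc => fst p + acc) 0 l = 1 /\
    forall v, (v < N)%nat ->
      gamma v = fold_right (fun p acc => fst p * ind (snd p v) + acc) 0 l.

Definition in_Delta (N K : nat) (b : nat -> nat) (delta : nat -> R) : Prop :=
  (forall k, (k < K)%nat -> 0 <= delta k <= 1) /\
  (forall v, (v < N)%nat -> sumR (flows_of K b v) delta = 1).

Definition feasible N K par b gamma delta : Prop :=
  in_convZ N par gamma /\ in_Delta N K b delta.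

(* all arguments of the logarithms are positive (objective finite);
   otherwise the objective is -infinity *)
Definition finite_obj (K : nat) (b : nat -> nat) (r : nat -> R) gamma delta : Prop :=
  forall k, (k < K)%nat -> 0 < r k * gamma (b k) * delta k.

Definition objective (K : nat) (b : nat -> nat) (r : nat -> R) gamma delta : R :=
  sumR (seq 0 K) (fun k => ln (r k * gamma (b k) * delta k)).

(* (gamma, delta) is an optimal solution of the problem, with the objective
   valued in [-oo, +oo) (ln 0 = -oo). *)
Definition is_optimal N K par b r gamma delta : Prop :=
  feasible N K par b gamma delta /\ finite_obj K b r gamma delta /\
  forall gamma' delta', feasible N K par b gamma' delta' ->
    finite_obj K b r gamma' delta' ->
    objective K b r gamma' delta' <= objective K b r gamma delta.

Definition kappa_star N K par b (v : nat) : R :=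
  INR (nv K b v) / sumR (cdescendants N par v) (fun u => INR (nv K b u)).
Definition gamma_star N K par b (v : nat) : R :=
  kappa_star N K par b v *
  prodR (ancestors N par v) (fun a => 1 - kappa_star N K par b a).
Definition delta_star K b (k : nat) : R := 1 / INR (nv K b (b k)).

(* Let [S v] be the number of flows in the closed subtree of [v] and put
   [w v = S v / prod_(a in A(v)) (1 - kappa_star a) = n_v / gamma_star v].  For a child [c]
   of [u] the product gains the factor [1 - kappa_star u = (S u - n_u) / S u], while the
   subtrees of the children of [u] carry at most [S u - n_u] flows, so [w u] dominates the
   sum of the [w c].  Telescoping over subtrees, [sum_(v in z) w v <= w root = |K|] for
   every antichain [z] in Z, hence [sum_v gamma v * w v <= |K|] on conv(Z).

   For a feasible pair the gap to [(gamma_star, delta_star)] is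
   [sum_k ln (gamma v_k / gamma_star v_k) + ln (n_(v_k) * delta k)]; by [ln x <= x - 1] it
   is at most [(sum_v gamma v * w v - |K|) + (sum_k n_(v_k) * delta k - |K|) <= 0], with
   equality only if every ratio is 1.  Finally [gamma_star] lies in conv(Z): flip
   independent coins with biases [kappa_star] and select each vertex whose coin is the first
   heads on its root path; [v] is selected with probability
   [kappa_star v * prod_(a in A(v)) (1 - kappa_star a)]. *)

From Pilot Require Import Defs.
From Stdlib Require Import Reals List Arith Lia Lra Bool.
Import ListNotations.
Open Scope R_scope.

(* [sumR]/[prodR] restricted to [nat] lists are instances of these, by conversion. *)
Definition sumL {A} (l : list A) (f : A -> R) : R :=
  fold_right (fun i acc => f i + acc) 0 l.
Definition prodL {A} (l : list A) (f : A -> R) : R :=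
  fold_right (fun i acc => f i * acc) 1 l.

Lemma sumR_sumL l f : sumR l f = sumL l f.
Proof. reflexivity. Qed.

Section ListSums.
Context {A : Type}.
Implicit Types (l : list A) (f g : A -> R).

Lemma sumL_ext l f g : (forall x, In x l -> f x = g x) -> sumL l f = sumL l g.
Proof. induction l; simpl; intros H; auto. rewrite H, IHl; auto. Qed.

Lemma sumL_plus l f g : sumL l (fun x => f x + g x) = sumL l f + sumL l g.
Proof. induction l; simpl; [lra|]. rewrite IHl; lra. Qed.

Lemma sumL_minus l f g : sumL l (fun x => f x - g x) = sumL l f - sumL l g.
Proof. induction l; simpl; [lra|]. rewrite IHl; lra. Qed.

Lemma sumL_scal l c f : sumL l (fun x => c * f x) = c * sumL l f.
Proof. induction l; simpl; [lra|]. rewrite IHl; lra. Qed.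

Lemma sumL_const l c : sumL l (fun _ => c) = INR (length l) * c.
Proof. induction l; simpl length; rewrite ?S_INR; simpl; [lra|]. rewrite IHl; lra. Qed.

Lemma sumL_zero l : sumL l (fun _ => 0) = 0.
Proof. rewrite sumL_const; lra. Qed.

Lemma sumL_if l (p : bool) f :
  (if p then sumL l f else 0) = sumL l (fun x => if p then f x else 0).
Proof. destruct p; auto. rewrite sumL_zero; auto. Qed.

Lemma sumL_le l f g : (forall x, In x l -> f x <= g x) -> sumL l f <= sumL l g.
Proof.
  induction l as [|a l IH]; simpl; intros H; [lra|].
  pose proof (H a (or_introl eq_refl)); pose proof (IH (fun x h => H x (or_intror h))); lra.
Qed.

Lemma sumL_nonneg l f : (forall x, In x l -> 0 <= f x) -> 0 <= sumL l f.
Proof. intros H. rewrite <- (sumL_zero l). apply sumL_le; auto. Qed.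

Lemma sumL_nonpos_eq0 l f : (forall x, In x l -> f x <= 0) -> 0 <= sumL l f ->
  forall x, In x l -> f x = 0.
Proof.
  induction l as [|a l IH]; simpl; intros H H0 x Hx; [tauto|].
  assert (sumL l f <= 0) by (rewrite <- (sumL_zero l); apply sumL_le; auto).
  assert (f a <= 0) by auto.
  destruct Hx as [<-|Hx]; [lra|]. apply IH; auto. lra.
Qed.

Lemma sumL_app l1 l2 f : sumL (l1 ++ l2) f = sumL l1 f + sumL l2 f.
Proof. induction l1; simpl; [lra|]. rewrite IHl1; lra. Qed.

Lemma sumL_map {B} (l : list B) (h : B -> A) f : sumL (map h l) f = sumL l (fun x => f (h x)).
Proof. induction l; simpl; auto. rewrite IHl; auto. Qed.

Lemma sumL_filter l p f :
  sumL (filter p l) f = sumL l (fun x => if p x then f x else 0).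
Proof. induction l; simpl; auto. destruct (p a); simpl; rewrite IHl; lra. Qed.

Lemma prodL_ext l f g : (forall x, In x l -> f x = g x) -> prodL l f = prodL l g.
Proof. induction l; simpl; intros H; auto. rewrite H, IHl; auto. Qed.

Lemma prodL_mult l f g : prodL l (fun x => f x * g x) = prodL l f * prodL l g.
Proof. induction l; simpl; [lra|]. rewrite IHl; lra. Qed.

Lemma prodL_filter l p f :
  prodL (filter p l) f = prodL l (fun x => if p x then f x else 1).
Proof. induction l; simpl; auto. destruct (p a); simpl; rewrite IHl; lra. Qed.

Lemma prodL_one l : prodL l (fun _ => 1) = 1.
Proof. induction l; simpl; auto. rewrite IHl; lra. Qed.

Lemma prodL_pos l f : (forall x, In x l -> 0 < f x) -> 0 < prodL l f.
Proof. induction l; simpl; intros H; [lra|]. apply Rmult_lt_0_compat; auto. Qed.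

End ListSums.

Lemma sumL_swap {A B} (l : list A) (l' : list B) F :
  sumL l (fun i => sumL l' (fun j => F i j)) = sumL l' (fun j => sumL l (fun i => F i j)).
Proof.
  induction l; simpl; [rewrite sumL_zero; auto|].
  rewrite IHl, <- sumL_plus; auto.
Qed.


Section NatListSums.
Implicit Types (l : list nat) (f : nat -> R).

Lemma sumL_single l a f : NoDup l -> In a l ->
  sumL l (fun x => if Nat.eqb x a then f x else 0) = f a.
Proof.
  induction l as [|y l IH]; simpl; intros Hn Hi; [tauto|]. inversion Hn; subst.
  destruct (Nat.eqb_spec y a) as [->|Hya].
  - rewrite (sumL_ext _ _ (fun _ => 0)), sumL_zero; [lra|].
    intros x Hx. destruct (Nat.eqb_spec x a); subst; tauto.
  - destruct Hi; [congruence|]. rewrite IH; auto. lra.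
Qed.

Lemma prodL_single l a f : NoDup l -> In a l ->
  prodL l (fun x => if Nat.eqb x a then f x else 1) = f a.
Proof.
  induction l as [|y l IH]; simpl; intros Hn Hi; [tauto|]. inversion Hn; subst.
  destruct (Nat.eqb_spec y a) as [->|Hya].
  - rewrite (prodL_ext _ _ (fun _ => 1)), prodL_one; [lra|].
    intros x Hx. destruct (Nat.eqb_spec x a); subst; tauto.
  - destruct Hi; [congruence|]. rewrite IH; auto. lra.
Qed.

Lemma sumL_le_single l a f : NoDup l -> In a l -> (forall x, 0 <= f x) -> f a <= sumL l f.
Proof.
  intros Hn Ha H. rewrite <- (sumL_single l a f Hn Ha). apply sumL_le.
  intros x _. destruct (Nat.eqb x a); [lra|apply H].
Qed.

Lemma sumL_le_pair l a c f : NoDup l -> In a l -> In c l -> a <> c -> (forall x, 0 <= f x) ->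
  f a + f c <= sumL l f.
Proof.
  intros Hn Ha Hc Hac H.
  rewrite <- (sumL_single l a f Hn Ha), <- (sumL_single l c f Hn Hc), <- sumL_plus.
  apply sumL_le. intros x _. specialize (H x).
  destruct (Nat.eqb_spec x a), (Nat.eqb_spec x c); subst; try congruence; lra.
Qed.

Lemma sumL_le1_single_support l f : NoDup l -> (forall x, 0 <= f x <= 1) ->
  (forall x y, In x l -> In y l -> f x <> 0 -> f y <> 0 -> x = y) -> sumL l f <= 1.
Proof.
  induction l as [|a l IH]; simpl; intros Hn Hf Hu; [lra|]. inversion Hn; subst.
  destruct (Req_dec (f a) 0) as [E|E].
  - rewrite E. assert (sumL l f <= 1) by (apply IH; auto). lra.
  - rewrite (sumL_ext l f (fun _ => 0)), sumL_zero; [specialize (Hf a); lra|].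
    intros x Hx. destruct (Req_dec (f x) 0); auto.
    assert (a = x) by (apply Hu; auto). subst; tauto.
Qed.

Lemma prodL_combine l a k f g h : NoDup l ->
  (forall y, In y l -> y <> a -> f y = h y /\ g y = h y) ->
  h a = k * f a + (1 - k) * g a ->
  k * prodL l f + (1 - k) * prodL l g = prodL l h.
Proof.
  induction l as [|y l IH]; simpl; intros Hn H Ha; [lra|]. inversion Hn; subst.
  destruct (Nat.eq_dec y a) as [->|Hya].
  - rewrite (prodL_ext l f h), (prodL_ext l g h), Ha; [lra| |];
      intros z Hz; apply H; auto; intro; subst; tauto.
  - destruct (H y (or_introl eq_refl) Hya) as [-> ->].
    rewrite <- IH; auto. lra.
Qed.

End NatListSums.

Lemma ln_le_sub1 x : 0 < x -> ln x <= x - 1.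
Proof. intros Hx. pose proof (exp_ineq1_le (ln x)). rewrite exp_ln in H; lra. Qed.

Lemma ln_eq_sub1 x : 0 < x -> ln x = x - 1 -> x = 1.
Proof.
  intros Hx He. destruct (Req_dec (ln x) 0) as [E|E].
  - rewrite <- (exp_ln x), E, exp_0; auto.
  - pose proof (exp_ineq1 _ E). rewrite exp_ln in H; lra.
Qed.

Lemma sumL_ln_le {A} (l : list A) f : (forall x, In x l -> 0 < f x) ->
  sumL l (fun x => ln (f x)) <= sumL l f - INR (length l).
Proof.
  intros H. rewrite <- (Rmult_1_r (INR _)), <- sumL_const, <- sumL_minus.
  apply sumL_le. intros x Hx. apply ln_le_sub1; auto.
Qed.

Lemma sumL_ln_eq {A} (l : list A) f : (forall x, In x l -> 0 < f x) ->
  sumL l f - INR (length l) <= sumL l (fun x => ln (f x)) -> forall x, In x l -> f x = 1.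
Proof.
  intros H Hge x Hx.
  assert (Hz : forall y, In y l -> ln (f y) - (f y - 1) = 0).
  { apply sumL_nonpos_eq0.
    - intros y Hy. pose proof (ln_le_sub1 (f y) (H y Hy)); lra.
    - rewrite sumL_minus, sumL_minus, sumL_const. lra. }
  apply ln_eq_sub1; auto. specialize (Hz x Hx). lra.
Qed.

(** * Ancestry in a rooted tree *)

Section Ancestry.
Variables (N : nat) (par : nat -> nat).
Hypothesis Htree : is_rooted_tree N par.
Local Open Scope nat_scope.

Definition up k v := Nat.iter k par v.
Definition is_anc a v := exists k, 1 <= k /\ up k v = a /\ forall j, j < k -> up j v <> 0.

Lemma up_add p q v : up (p + q) v = up p (up q v).
Proof. apply Nat.iter_add. Qed.
Lemma up_S k v : up (S k) v = par (up k v).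
Proof. apply Nat.iter_succ. Qed.
Lemma up_Sr k v : up (S k) v = up k (par v).
Proof. apply Nat.iter_succ_r. Qed.

Lemma up_lt v k : v < N -> (forall j, j < k -> up j v <> 0) -> up k v < N.
Proof.
  destruct Htree as [_ [Hp _]]. intros Hv. induction k; intros H; auto.
  rewrite up_S. apply Hp. split; [|apply IHk; intros; apply H; lia].
  pose proof (H k ltac:(lia)). lia.
Qed.

Lemma depth_exists v : v < N -> exists d, up d v = 0 /\ forall j, j < d -> up j v <> 0.
Proof.
  destruct Htree as [_ [_ Hr]]. intros Hv. destruct (Hr v Hv) as [k Hk].
  change (Nat.iter k par v) with (up k v) in Hk. revert Hk.
  induction k as [k IH] using lt_wf_ind. intros Hk.
  destruct (existsb (fun j => Nat.eqb (up j v) 0) (seq 0 k)) eqn:E.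
  - apply existsb_exists in E as [j [Hj Hj0]]. apply in_seq in Hj. apply Nat.eqb_eq in Hj0.
    apply (IH j); [lia|auto].
  - exists k; split; auto. intros j Hj Hj0.
    assert (existsb (fun j => Nat.eqb (up j v) 0) (seq 0 k) = true) by
      (apply existsb_exists; exists j; rewrite in_seq, Nat.eqb_eq; split; [lia|auto]).
    congruence.
Qed.

(* The iterates [up j v], [j < d], are distinct non-root vertices. *)
Lemma depth_lt v d : v < N -> up d v = 0 -> (forall j, j < d -> up j v <> 0) -> d < N.
Proof.
  intros Hv Hd Hm.
  assert (Hinj : forall i j, i < d -> j < d -> up i v = up j v -> i = j).
  { intros i j Hi Hj He. destruct (Nat.lt_trichotomy i j) as [h|[h|h]]; auto; exfalso.
    - apply (Hm (d - j + i)); [lia|]. rewrite up_add, He, <- up_add.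
      replace (d - j + j) with d by lia; auto.
    - apply (Hm (d - i + j)); [lia|]. rewrite up_add, <- He, <- up_add.
      replace (d - i + i) with d by lia; auto. }
  assert (HN : NoDup (map (fun j => up j v) (seq 0 d))).
  { apply NoDup_map_NoDup_ForallPairs; [|apply seq_NoDup].
    intros i j Hi Hj. apply in_seq in Hi, Hj. apply Hinj; lia. }
  assert (Hi : incl (map (fun j => up j v) (seq 0 d)) (seq 1 (N - 1))).
  { intros x Hx. apply in_map_iff in Hx as [j [<- Hj]]. apply in_seq in Hj. apply in_seq.
    pose proof (Hm j ltac:(lia)).
    assert (up j v < N) by (apply up_lt; auto; intros; apply Hm; lia). lia. }
  pose proof (NoDup_incl_length HN Hi) as Hlen. rewrite length_map, !length_seq in Hlen. lia.
Qed.

Lemma ancb_spec a v : v < N -> (ancb N par a v = true <-> is_anc a v).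
Proof.
  intros Hv. unfold ancb. rewrite existsb_exists. split.
  - intros [k [Hk Hb]]. apply in_seq in Hk. apply andb_true_iff in Hb as [H1 H2].
    apply Nat.eqb_eq in H1. rewrite forallb_forall in H2. exists k. repeat split; try lia; auto.
    intros j Hj. specialize (H2 j (proj2 (in_seq k 0 j) ltac:(lia))).
    apply negb_true_iff, Nat.eqb_neq in H2; auto.
  - intros [k [Hk1 [Hk2 Hk3]]]. destruct (depth_exists v Hv) as [d [Hd Hm]].
    pose proof (depth_lt v d Hv Hd Hm).
    assert (k <= d) by (destruct (Nat.le_gt_cases k d); auto; exfalso; apply (Hk3 d); auto).
    exists k. split; [apply in_seq; lia|]. apply andb_true_iff; split.
    + apply Nat.eqb_eq; auto.
    + apply forallb_forall. intros j Hj. apply in_seq in Hj. apply negb_true_iff, Nat.eqb_neq.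
      apply Hk3; lia.
Qed.

Lemma anc_lt a v : v < N -> is_anc a v -> a < N.
Proof. intros Hv [k [_ [<- H]]]. apply up_lt; auto. Qed.

Lemma anc_irrefl v : v < N -> ~ is_anc v v.
Proof.
  intros Hv [k [Hk1 [Hk2 Hk3]]]. destruct (depth_exists v Hv) as [d [Hd _]].
  assert (Hnz : forall j, up j v <> 0).
  { intros j. induction j as [j IH] using lt_wf_ind.
    destruct (Nat.lt_ge_cases j k); auto.
    replace j with ((j - k) + k) by lia. rewrite up_add, Hk2. apply IH; lia. }
  apply (Hnz d); auto.
Qed.

Lemma anc_parent a c : c <> 0 -> (is_anc a c <-> a = par c \/ is_anc a (par c)).
Proof.
  intros Hc. split.
  - intros [[|[|k]] [Hk1 [Hk2 Hk3]]]; [lia|left; auto|].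
    right. exists (S k). split; [lia|]. rewrite <- up_Sr. split; auto.
    intros j Hj. rewrite <- up_Sr. apply Hk3; lia.
  - intros [->|[k [Hk1 [Hk2 Hk3]]]].
    + exists 1. repeat split; auto. intros [|j] Hj; [auto|lia].
    + exists (S k). split; [lia|]. rewrite up_Sr. split; auto.
      intros [|j] Hj; [auto|]. rewrite up_Sr. apply Hk3; lia.
Qed.

Lemma anc_trans a b c : is_anc a b -> is_anc b c -> is_anc a c.
Proof.
  intros [ka [Ha1 [Ha2 Ha3]]] [kb [Hb1 [Hb2 Hb3]]]. exists (ka + kb).
  split; [lia|]. rewrite up_add, Hb2. split; auto. intros j Hj.
  destruct (Nat.lt_ge_cases j kb); auto. replace j with ((j - kb) + kb) by lia.
  rewrite up_add, Hb2. apply Ha3; lia.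
Qed.

Lemma anc_total a1 a2 w : is_anc a1 w -> is_anc a2 w -> a1 = a2 \/ is_anc a1 a2 \/ is_anc a2 a1.
Proof.
  intros [k1 [H11 [<- H13]]] [k2 [H21 [<- H23]]].
  destruct (Nat.lt_trichotomy k1 k2) as [h|[->|h]]; [right; right| left; auto| right; left].
  - exists (k2 - k1). split; [lia|]. rewrite <- up_add.
    replace (k2 - k1 + k1) with k2 by lia. split; auto. intros j Hj.
    rewrite <- up_add. apply H23; lia.
  - exists (k1 - k2). split; [lia|]. rewrite <- up_add.
    replace (k1 - k2 + k2) with k1 by lia. split; auto. intros j Hj.
    rewrite <- up_add. apply H13; lia.
Qed.

Lemma root_anc w : 0 < w < N -> is_anc 0 w.
Proof.
  intros Hw. destruct (depth_exists w ltac:(lia)) as [[|d] [Hd Hm]]; [simpl in Hd; lia|].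
  exists (S d). split; auto. lia.
Qed.

Lemma not_anc_root a : ~ is_anc a 0.
Proof. intros [k [Hk1 [_ Hk3]]]. apply (Hk3 0); auto; lia. Qed.

End Ancestry.

(** * Dominating weights and antichains *)

Section TreeSums.
Variables (N : nat) (par : nat -> nat).
Hypothesis Htree : is_rooted_tree N par.

Definition verts := seq 0 N.

Lemma in_verts v : In v verts <-> (v < N)%nat.
Proof. unfold verts; rewrite in_seq; lia. Qed.

Lemma verts_nodup : NoDup verts.
Proof. apply seq_NoDup. Qed.

Definition cdescb w v := Nat.eqb w v || ancb N par v w.
Definition childb c w := negb (Nat.eqb c 0) && Nat.eqb (par c) w.

Lemma cdescb_refl v : cdescb v v = true.
Proof. unfold cdescb; rewrite Nat.eqb_refl; auto. Qed.

Lemma cdescb_neq w v : w <> v -> cdescb w v = ancb N par v w.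
Proof. intros Hwv. unfold cdescb. apply Nat.eqb_neq in Hwv. rewrite Hwv. reflexivity. Qed.

Lemma cdescb_spec w v : (w < N)%nat -> (cdescb w v = true <-> w = v \/ is_anc par v w).
Proof. intros Hw. unfold cdescb. rewrite orb_true_iff, Nat.eqb_eq, (ancb_spec N par Htree); tauto. Qed.

Lemma cdescb_root w : (w < N)%nat -> cdescb w 0 = true.
Proof.
  intros Hw. apply cdescb_spec; auto.
  destruct w; [left; auto|right; apply (root_anc N par Htree); auto; lia].
Qed.

Lemma ancb_irrefl v : (v < N)%nat -> ancb N par v v = false.
Proof.
  intros Hv. apply not_true_iff_false. rewrite (ancb_spec N par Htree) by auto.
  apply (anc_irrefl N par Htree); auto.
Qed.

Lemma childb_spec c w : childb c w = true <-> c <> 0%nat /\ par c = w.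
Proof. unfold childb. rewrite andb_true_iff, negb_true_iff, Nat.eqb_neq, Nat.eqb_eq. tauto. Qed.

Lemma sibling_not_anc c1 c2 : (c2 < N)%nat -> c1 <> 0%nat -> c2 <> 0%nat ->
  par c1 = par c2 -> ~ is_anc par c2 c1.
Proof.
  intros H2 H10 H20 Hp Ha. apply (anc_irrefl N par Htree c2 H2).
  apply (anc_parent par c2 c1 H10) in Ha as [Ha|Ha].
  - apply (anc_parent par c2 c2 H20). left; congruence.
  - eapply anc_trans; [exact Ha|]. apply (anc_parent par (par c1) c2 H20). left; congruence.
Qed.

Lemma child_cdesc_anc c w u : (u < N)%nat -> childb c w = true -> cdescb u c = true ->
  is_anc par w u.
Proof.
  intros Hu Hch Hd. apply childb_spec in Hch as [Hc0 <-].
  assert (Hpc : is_anc par (par c) c) by (apply anc_parent; auto).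
  apply cdescb_spec in Hd as [->|Hd]; auto. eapply anc_trans; eauto.
Qed.

Lemma child_cdesc_unique c1 c2 w u : (c1 < N)%nat -> (c2 < N)%nat -> (u < N)%nat ->
  childb c1 w = true -> childb c2 w = true -> cdescb u c1 = true -> cdescb u c2 = true ->
  c1 = c2.
Proof.
  intros H1 H2 Hu Hc1 Hc2 Hd1 Hd2.
  apply childb_spec in Hc1 as [A1 B1], Hc2 as [A2 B2].
  assert (Hp : par c1 = par c2) by congruence.
  apply (cdescb_spec u c1 Hu) in Hd1. apply (cdescb_spec u c2 Hu) in Hd2.
  destruct Hd1 as [E1|Hd1], Hd2 as [E2|Hd2]; try congruence.
  - subst u. exfalso. apply (sibling_not_anc c1 c2); auto.
  - subst u. exfalso. apply (sibling_not_anc c2 c1); auto.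
  - destruct (anc_total par c1 c2 u Hd1 Hd2) as [E|[E|E]]; auto; exfalso.
    + apply (sibling_not_anc c2 c1); auto.
    + apply (sibling_not_anc c1 c2); auto.
Qed.

(* Each strict descendant of [w] lies below at most one child of [w]. *)
Lemma sum_children_cdesc_le f w : (w < N)%nat -> (forall u, 0 <= f u) ->
  sumL verts (fun c => if childb c w then sumL verts (fun u => if cdescb u c then f u else 0) else 0)
  <= sumL verts (fun u => if ancb N par w u then f u else 0).
Proof.
  intros Hw Hf.
  rewrite (sumL_ext verts _ (fun c => sumL verts (fun u => f u * (if childb c w && cdescb u c then 1 else 0)))).
  2:{ intros c _. rewrite sumL_if. apply sumL_ext. intros u _.
      destruct (childb c w), (cdescb u c); simpl; lra. }
  rewrite sumL_swap. apply sumL_le. intros u Hu. apply in_verts in Hu.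
  rewrite sumL_scal. destruct (ancb N par w u) eqn:E.
  - rewrite <- (Rmult_1_r (f u)) at 2. apply Rmult_le_compat_l; auto.
    apply sumL_le1_single_support; auto using verts_nodup.
    + intros c. destruct (childb c w && cdescb u c); lra.
    + intros c1 c2 Hc1 Hc2 N1 N2. apply in_verts in Hc1, Hc2.
      destruct (childb c1 w) eqn:X1, (cdescb u c1) eqn:Y1; simpl in N1; try lra.
      destruct (childb c2 w) eqn:X2, (cdescb u c2) eqn:Y2; simpl in N2; try lra.
      exact (child_cdesc_unique c1 c2 w u Hc1 Hc2 Hu X1 X2 Y1 Y2).
  - rewrite (sumL_ext verts _ (fun _ => 0)), sumL_zero; [lra|].
    intros c Hc. apply in_verts in Hc.
    destruct (childb c w) eqn:X, (cdescb u c) eqn:Y; simpl; auto.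
    assert (ancb N par w u = true) by (apply (ancb_spec N par Htree); auto; eapply child_cdesc_anc; eauto).
    congruence.
Qed.

Definition excess (m : nat -> R) w := m w - sumL verts (fun c => if childb c w then m c else 0).

(* Every [c <> v] in the closed subtree of [v] is counted once, as a child of [par c]. *)
Lemma cdesc_telescope m v : (v < N)%nat ->
  m v = sumL verts (fun w => if cdescb w v then excess m w else 0).
Proof.
  intros Hv. destruct Htree as [_ [Hp _]].
  rewrite (sumL_ext verts _ (fun w => (if cdescb w v then m w else 0) -
     sumL verts (fun c => if cdescb w v then (if childb c w then m c else 0) else 0))).
  2:{ intros w _. unfold excess. rewrite <- sumL_if. destruct (cdescb w v); lra. }
  rewrite sumL_minus, sumL_swap.
  rewrite (sumL_ext verts (fun c => sumL verts _)
             (fun c => if cdescb c v && negb (Nat.eqb c v) then m c else 0)).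
  - rewrite <- sumL_minus, <- (sumL_single verts v m verts_nodup) by (apply in_verts; auto).
    apply sumL_ext. intros w _. destruct (Nat.eqb_spec w v) as [->|]; simpl.
    + rewrite cdescb_refl. simpl. lra.
    + destruct (cdescb w v); simpl; lra.
  - intros c Hc. apply in_verts in Hc. destruct (Nat.eq_dec c 0) as [->|Hc0].
    + rewrite (sumL_ext verts _ (fun _ => 0)), sumL_zero.
      * destruct (cdescb 0 v) eqn:D; simpl; auto. apply cdescb_spec in D; [|lia].
        destruct D as [<-|D]; [simpl; auto|]. exfalso; eapply not_anc_root; eauto.
      * intros w _. destruct (cdescb w v); auto.
    + assert (Hpc : (par c < N)%nat) by (apply Hp; lia).
      rewrite (sumL_ext verts _
        (fun w => if Nat.eqb w (par c) then (if cdescb (par c) v then m c else 0) else 0)).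
      2:{ intros w _. unfold childb.
          replace (Nat.eqb c 0) with false by (symmetry; apply Nat.eqb_neq; auto). simpl.
          destruct (Nat.eqb_spec w (par c)) as [->|Hw].
          - rewrite Nat.eqb_refl. destruct (cdescb (par c) v); auto.
          - replace (Nat.eqb (par c) w) with false by (symmetry; apply Nat.eqb_neq; auto).
            destruct (cdescb w v); auto. }
      rewrite (sumL_single verts (par c) (fun _ => if cdescb (par c) v then m c else 0) verts_nodup)
        by (apply in_verts; auto).
      replace (cdescb (par c) v) with (cdescb c v && negb (Nat.eqb c v)); auto.
      apply eq_iff_eq_true.
      rewrite andb_true_iff, negb_true_iff, Nat.eqb_neq, !cdescb_spec, (anc_parent par v c Hc0)
        by auto.
      split.
      * intros [[E|[E|E]] F]; [congruence|left|right]; auto.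
      * intros E. split; [right; destruct E; [left|right]; auto|].
        intros Hcv. subst v. apply (anc_irrefl N par Htree c Hc), (anc_parent par c c Hc0).
        destruct E; [left|right]; auto.
Qed.

Lemma ind_bounds bb : 0 <= Defs.ind bb <= 1.
Proof. destruct bb; simpl; lra. Qed.

(* Telescoping, the sum counts each [excess m w] once per element of the antichain
   above [w], i.e. at most once. *)
Lemma antichain_sum_le m z : (forall w, (w < N)%nat -> 0 <= excess m w) -> inZ N par z ->
  sumL verts (fun v => Defs.ind (z v) * m v) <= m 0%nat.
Proof.
  intros Hm Hz. destruct Htree as [HN _].
  rewrite (sumL_ext verts _
    (fun v => sumL verts (fun w => if cdescb w v then Defs.ind (z v) * excess m w else 0))).
  2:{ intros v Hv. apply in_verts in Hv. rewrite cdesc_telescope, <- sumL_scal by auto.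
      apply sumL_ext. intros w _. destruct (cdescb w v); lra. }
  rewrite sumL_swap, (cdesc_telescope m 0) by auto.
  apply sumL_le. intros w Hw. apply in_verts in Hw. rewrite cdescb_root by auto.
  rewrite (sumL_ext verts _ (fun v => excess m w * (if cdescb w v then Defs.ind (z v) else 0)))
    by (intros v _; destruct (cdescb w v); lra).
  rewrite sumL_scal. rewrite <- (Rmult_1_r (excess m w)) at 2.
  apply Rmult_le_compat_l; auto. apply sumL_le1_single_support; auto using verts_nodup.
  - intros v. destruct (cdescb w v); [apply ind_bounds|lra].
  - intros v1 v2 H1 H2 N1 N2. apply in_verts in H1, H2.
    destruct (cdescb w v1) eqn:D1; [|lra]. destruct (cdescb w v2) eqn:D2; [|lra].
    destruct (z v1) eqn:Z1; [|simpl in N1; lra]. destruct (z v2) eqn:Z2; [|simpl in N2; lra].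
    assert (Hno : forall a v, (a < N)%nat -> (v < N)%nat -> is_anc par a v -> z v = true ->
              z a = true -> False)
      by (intros a v Ha Hv Hav Zv Za; apply (Hz v a Hv Ha); auto; apply (ancb_spec N par Htree); auto).
    apply cdescb_spec in D1, D2; auto.
    destruct D1 as [<-|D1], D2 as [E|D2]; auto.
    + exfalso. apply (Hno v2 w); auto.
    + subst. exfalso. apply (Hno v1 v2); auto.
    + destruct (anc_total par v1 v2 w D1 D2) as [E|[E|E]]; auto; exfalso.
      * apply (Hno v1 v2); auto.
      * apply (Hno v2 v1); auto.
Qed.

Lemma convZ_nonneg g : in_convZ N par g -> forall v, (v < N)%nat -> 0 <= g v.
Proof.
  intros [l [Hl [_ Hg]]] v Hv. rewrite Hg by auto.
  change (0 <= sumL l (fun p => fst p * Defs.ind (snd p v))). apply sumL_nonneg.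
  intros p Hp. rewrite Forall_forall in Hl. destruct (Hl p Hp) as [H _].
  apply Rmult_le_pos; auto. apply ind_bounds.
Qed.

Lemma convZ_sum_le m g : (forall w, (w < N)%nat -> 0 <= excess m w) -> in_convZ N par g ->
  sumL verts (fun v => g v * m v) <= m 0%nat.
Proof.
  intros Hm [l [Hl [H1 Hg]]].
  change (fold_right (fun p acc => fst p + acc) 0 l) with (sumL l fst) in H1.
  rewrite (sumL_ext verts _ (fun v => sumL l (fun p => fst p * (Defs.ind (snd p v) * m v)))).
  2:{ intros v Hv. apply in_verts in Hv. rewrite Hg by auto.
      change (sumL l (fun p => fst p * Defs.ind (snd p v)) * m v =
              sumL l (fun p => fst p * (Defs.ind (snd p v) * m v))).
      rewrite Rmult_comm, <- sumL_scal. apply sumL_ext; intros; lra. }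
  rewrite sumL_swap. apply Rle_trans with (sumL l (fun p => m 0%nat * fst p)).
  - apply sumL_le. intros p Hp. rewrite sumL_scal, (Rmult_comm (m 0%nat)).
    rewrite Forall_forall in Hl. destruct (Hl p Hp) as [Hp1 Hp2].
    apply Rmult_le_compat_l; auto. apply antichain_sum_le; auto.
  - rewrite sumL_scal, H1. lra.
Qed.

(** * Independent coins and first hits *)

(* The distribution of independent coin flips [c y], [y \in L], with [P(c y = true) = p y];
   the coins of vertices outside [L] are [false]. *)
Fixpoint coin_flips (p : nat -> R) (L : list nat) : list (R * (nat -> bool)) :=
  match L with
  | [] => [(1, fun _ => false)]
  | x :: L' =>
      map (fun q => (p x * fst q, fun y => if Nat.eqb y x then true else snd q y)) (coin_flips p L') ++
      map (fun q => ((1 - p x) * fst q, snd q)) (coin_flips p L')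
  end.

Lemma coin_flips_nonneg p L : (forall y, In y L -> 0 <= p y <= 1) ->
  forall q, In q (coin_flips p L) -> 0 <= fst q.
Proof.
  induction L as [|x L IH]; simpl; intros Hp q Hq.
  - destruct Hq as [<-|[]]; simpl; lra.
  - pose proof (Hp x (or_introl eq_refl)).
    apply in_app_iff in Hq as [Hq|Hq]; apply in_map_iff in Hq as [q' [<- Hq']]; simpl;
      pose proof (IH (fun y h => Hp y (or_intror h)) q' Hq'); apply Rmult_le_pos; lra.
Qed.

Lemma coin_flips_expect p L U h : NoDup L -> NoDup U ->
  sumL (coin_flips p L) (fun q => fst q * prodL U (fun y => h y (snd q y))) =
  prodL U (fun y => if in_dec Nat.eq_dec y L
                    then p y * h y true + (1 - p y) * h y false else h y false).
Proof.
  intros HL HU. revert h. induction L as [|x L IH]; intros h.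
  - simpl. rewrite Rplus_0_r, Rmult_1_l. apply prodL_ext. auto.
  - inversion HL; subst. simpl coin_flips. rewrite sumL_app, !sumL_map. simpl fst; simpl snd.
    set (h' := fun y bb => if Nat.eqb y x then h x true else h y bb).
    rewrite (sumL_ext (coin_flips p L) _
      (fun q => p x * (fst q * prodL U (fun y => h' y (snd q y))))).
    2:{ intros q _. rewrite Rmult_assoc. f_equal. f_equal. apply prodL_ext. intros y _.
        unfold h'. destruct (Nat.eqb_spec y x); subst; auto. }
    rewrite (sumL_ext (coin_flips p L) (fun q => (1 - p x) * fst q * _)
      (fun q => (1 - p x) * (fst q * prodL U (fun y => h y (snd q y))))) by (intros; lra).
    rewrite !sumL_scal, !IH by auto.
    apply (prodL_combine U x (p x)); auto.
    + intros y _ Hyx. unfold h'. replace (Nat.eqb y x) with false by (symmetry; apply Nat.eqb_neq; auto).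
      destruct (in_dec Nat.eq_dec y L) as [i1|n1], (in_dec Nat.eq_dec y (x :: L)) as [i2|n2];
        [split; reflexivity | exfalso; apply n2; right; exact i1
        | exfalso; destruct i2; [congruence|tauto] | split; reflexivity].
    + unfold h'. rewrite Nat.eqb_refl.
      destruct (in_dec Nat.eq_dec x L) as [i1|n1]; [tauto|].
      destruct (in_dec Nat.eq_dec x (x :: L)) as [i2|n2]; [reflexivity|exfalso; apply n2; left; auto].
Qed.

Definition first_hit (c : nat -> bool) v :=
  c v && forallb (fun a => negb (c a)) (ancestors N par v).

Lemma first_hit_inZ c : inZ N par (first_hit c).
Proof.
  intros v a Hv Ha Hav [H1 H2]. unfold first_hit in H1, H2.
  apply andb_true_iff in H1 as [_ H1]. apply andb_true_iff in H2 as [H2 _].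
  rewrite forallb_forall in H1.
  assert (Hin : In a (ancestors N par v)) by (apply filter_In; split; auto; apply in_seq; lia).
  specialize (H1 a Hin). rewrite H2 in H1. discriminate.
Qed.

Lemma ind_and b1 b2 : Defs.ind (b1 && b2) = Defs.ind b1 * Defs.ind b2.
Proof. destruct b1, b2; simpl; lra. Qed.

Lemma ind_forallb {A} (p : A -> bool) l :
  Defs.ind (forallb p l) = prodL l (fun a => Defs.ind (p a)).
Proof. induction l; simpl; auto. rewrite ind_and, IHl; auto. Qed.

Definition first_hit_factor v y bb :=
  (if Nat.eqb y v then Defs.ind bb else 1) * (if ancb N par y v then Defs.ind (negb bb) else 1).

Lemma ind_first_hit c v : (v < N)%nat ->
  Defs.ind (first_hit c v) = prodL verts (fun y => first_hit_factor v y (c y)).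
Proof.
  intros Hv. unfold first_hit, first_hit_factor.
  rewrite ind_and, ind_forallb, prodL_mult.
  rewrite (prodL_single verts v (fun y => Defs.ind (c y))); auto using verts_nodup; [|apply in_verts; auto].
  f_equal. unfold ancestors. rewrite prodL_filter. reflexivity.
Qed.

Lemma first_hit_convZ p : (forall y, (y < N)%nat -> 0 <= p y <= 1) ->
  in_convZ N par (fun v => p v * prodR (ancestors N par v) (fun a => 1 - p a)).
Proof.
  intros Hp.
  exists (map (fun q => (fst q, first_hit (snd q))) (coin_flips p verts)). split; [|split].
  - apply Forall_forall. intros q Hq. apply in_map_iff in Hq as [q' [<- Hq']]. split.
    + simpl. apply (coin_flips_nonneg p verts); auto. intros y Hy. apply Hp, in_verts; auto.
    + apply first_hit_inZ.
  - change (sumL (map (fun q => (fst q, first_hit (snd q))) (coin_flips p verts)) fst = 1).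
    rewrite sumL_map. simpl.
    pose proof (coin_flips_expect p verts verts (fun _ _ => 1) verts_nodup verts_nodup) as E.
    cbv beta in E. rewrite prodL_one in E.
    rewrite (sumL_ext _ _ (fun q => fst q * 1)), E by (intros; lra).
    rewrite (prodL_ext _ _ (fun _ => 1)); [apply prodL_one|].
    intros y _. destruct (in_dec Nat.eq_dec y verts); lra.
  - intros v Hv.
    change (p v * prodL (ancestors N par v) (fun a => 1 - p a) =
      sumL (map (fun q => (fst q, first_hit (snd q))) (coin_flips p verts))
        (fun q => fst q * Defs.ind (snd q v))).
    rewrite sumL_map. simpl.
    rewrite (sumL_ext _ _ (fun q => fst q * prodL verts (fun y => first_hit_factor v y (snd q y))))
      by (intros; rewrite ind_first_hit; auto).
    rewrite coin_flips_expect by apply verts_nodup.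
    unfold ancestors. rewrite prodL_filter.
    rewrite <- (prodL_single verts v p verts_nodup) by (apply in_verts; auto).
    rewrite <- prodL_mult. apply prodL_ext. intros y Hy.
    destruct (in_dec Nat.eq_dec y verts); [|tauto]. unfold first_hit_factor.
    destruct (Nat.eqb_spec y v) as [->|].
    + rewrite ancb_irrefl by auto. simpl; lra.
    + destruct (ancb N par y v); simpl; lra.
Qed.

End TreeSums.

(** * The optimal solution *)

Section Optimum.
Variables (N K : nat) (par b : nat -> nat).
Hypothesis Htree : is_rooted_tree N par.
Hypothesis Hb : forall k, (k < K)%nat -> (b k < N)%nat.
Hypothesis Hn : forall v, (v < N)%nat -> (1 <= nv K b v)%nat.

Local Notation kappa := (kappa_star N K par b).
Local Notation gstar := (gamma_star N K par b).
Local Notation dstar := (delta_star K b).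
Local Notation verts := (verts N).
Local Notation cdescb := (cdescb N par).
Local Notation childb := (childb par).

Definition nflows v := INR (nv K b v).
Definition load v := sumR (cdescendants N par v) nflows.
Definition survival v := prodR (ancestors N par v) (fun a => 1 - kappa a).
Definition weight v := load v / survival v.

Lemma load_eq v : load v = sumL verts (fun u => if cdescb u v then nflows u else 0).
Proof. apply sumL_filter. Qed.

Lemma survival_eq v :
  survival v = prodL verts (fun a => if ancb N par a v then 1 - kappa a else 1).
Proof. apply prodL_filter. Qed.

Lemma nflows_ge1 v : (v < N)%nat -> 1 <= nflows v.
Proof. intros Hv. apply (le_INR 1), Hn, Hv. Qed.

Lemma nflows_nonneg v : 0 <= nflows v.
Proof. apply pos_INR. Qed.

Lemma cdesc_nflows_nonneg v u : 0 <= (if cdescb u v then nflows u else 0).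
Proof. destruct (cdescb u v); [apply nflows_nonneg|lra]. Qed.

Lemma nflows_le_load v : (v < N)%nat -> nflows v <= load v.
Proof.
  intros Hv. rewrite load_eq.
  pose proof (sumL_le_single verts v (fun u => if cdescb u v then nflows u else 0)
    (verts_nodup N) (proj2 (in_verts N v) Hv) (cdesc_nflows_nonneg v)) as Hs.
  cbv beta in Hs. rewrite cdescb_refl in Hs. exact Hs.
Qed.

Lemma load_pos v : (v < N)%nat -> 0 < load v.
Proof. intros Hv. pose proof (nflows_le_load v Hv); pose proof (nflows_ge1 v Hv); lra. Qed.

Lemma load_anc a v : (v < N)%nat -> is_anc par a v -> nflows a + nflows v <= load a.
Proof.
  intros Hv Ha. assert (Hal : (a < N)%nat) by (eapply anc_lt; eauto).
  assert (Hav : a <> v) by (intros ->; eapply anc_irrefl; eauto).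
  rewrite load_eq.
  pose proof (sumL_le_pair verts a v (fun u => if cdescb u a then nflows u else 0)
    (verts_nodup N) (proj2 (in_verts N a) Hal) (proj2 (in_verts N v) Hv) Hav
    (cdesc_nflows_nonneg a)) as Hs.
  cbv beta in Hs. rewrite cdescb_refl in Hs. replace (cdescb v a) with true in Hs; [exact Hs|].
  symmetry. apply cdescb_spec; auto.
Qed.

Lemma kappa_eq v : kappa v = nflows v / load v.
Proof. reflexivity. Qed.

Lemma kappa_bounds v : (v < N)%nat -> 0 < kappa v <= 1.
Proof.
  intros Hv. rewrite kappa_eq. pose proof (load_pos v Hv). pose proof (nflows_le_load v Hv).
  pose proof (nflows_ge1 v Hv). split.
  - apply Rdiv_lt_0_compat; lra.
  - apply Rmult_le_reg_r with (load v); [lra|].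
    unfold Rdiv. rewrite Rmult_assoc, Rinv_l; lra.
Qed.

Lemma kappa_anc_lt1 a v : (v < N)%nat -> is_anc par a v -> kappa a < 1.
Proof.
  intros Hv Ha. assert (Hal : (a < N)%nat) by (eapply anc_lt; eauto).
  pose proof (load_anc a v Hv Ha). pose proof (nflows_ge1 v Hv). pose proof (load_pos a Hal).
  rewrite kappa_eq. apply Rmult_lt_reg_r with (load a); [lra|].
  unfold Rdiv. rewrite Rmult_assoc, Rinv_l; lra.
Qed.

Lemma survival_pos v : (v < N)%nat -> 0 < survival v.
Proof.
  intros Hv. apply prodL_pos. intros a Ha. apply filter_In in Ha as [_ Ha].
  apply ancb_spec in Ha; auto. pose proof (kappa_anc_lt1 a v Hv Ha). lra.
Qed.

Lemma gstar_pos v : (v < N)%nat -> 0 < gstar v.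
Proof.
  intros Hv. apply Rmult_lt_0_compat; [apply kappa_bounds, Hv|apply survival_pos, Hv].
Qed.

Lemma weight_eq v : (v < N)%nat -> nflows v / gstar v = weight v.
Proof.
  intros Hv. unfold weight. change (gstar v) with (kappa v * survival v). rewrite kappa_eq.
  pose proof (load_pos v Hv). pose proof (survival_pos v Hv). pose proof (nflows_ge1 v Hv).
  field. repeat split; lra.
Qed.

Lemma survival_child c : (c < N)%nat -> c <> 0%nat ->
  survival c = (1 - kappa (par c)) * survival (par c).
Proof.
  intros Hc Hc0. destruct Htree as [_ [Hp _]]. assert (Hpc : (par c < N)%nat) by (apply Hp; lia).
  rewrite !survival_eq.
  rewrite <- (prodL_single verts (par c) (fun a => 1 - kappa a)) at 1
    by (auto using verts_nodup; apply in_verts; auto).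
  rewrite <- prodL_mult. apply prodL_ext. intros a Ha.
  replace (ancb N par a c) with (Nat.eqb a (par c) || ancb N par a (par c)).
  - destruct (Nat.eqb_spec a (par c)) as [->|]; simpl; [|lra].
    rewrite ancb_irrefl by auto. lra.
  - apply eq_iff_eq_true. rewrite orb_true_iff, Nat.eqb_eq, !ancb_spec by auto.
    symmetry. apply anc_parent; auto.
Qed.

Lemma sum_children_load_le w : (w < N)%nat ->
  sumL verts (fun c => if childb c w then load c else 0) <= load w - nflows w.
Proof.
  intros Hw.
  rewrite (sumL_ext verts _ (fun c => if childb c w then
             sumL verts (fun u => if cdescb u c then nflows u else 0) else 0))
    by (intros; rewrite load_eq; auto).
  eapply Rle_trans; [apply sum_children_cdesc_le; auto using nflows_nonneg|].
  rewrite load_eq, <- (sumL_single verts w nflows (verts_nodup N)) by (apply in_verts; auto).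
  rewrite <- sumL_minus. apply Req_le, sumL_ext. intros u Hu. apply in_verts in Hu.
  destruct (Nat.eq_dec u w) as [->|Huw].
  - rewrite cdescb_refl, ancb_irrefl, Nat.eqb_refl by auto. lra.
  - rewrite cdescb_neq by auto. replace (Nat.eqb u w) with false by (symmetry; apply Nat.eqb_neq; auto).
    destruct (ancb N par w u); lra.
Qed.

Lemma weight_excess_nonneg w : (w < N)%nat -> 0 <= excess N par weight w.
Proof.
  intros Hw. unfold excess.
  set (P := sumL verts (fun c => if childb c w then load c else 0)).
  pose proof (sum_children_load_le w Hw) as HP. fold P in HP.
  assert (HP0 : 0 <= P).
  { apply sumL_nonneg. intros c _. destruct (childb c w); [|lra].
    rewrite load_eq. apply sumL_nonneg. intros; apply cdesc_nflows_nonneg. }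
  (* [/ 0 = 0] makes this hold even when [kappa w = 1]. *)
  assert (E : sumL verts (fun c => if childb c w then weight c else 0) =
              P * / ((1 - kappa w) * survival w)).
  { unfold P. rewrite Rmult_comm, <- sumL_scal. apply sumL_ext. intros c Hc.
    apply in_verts in Hc. destruct (childb c w) eqn:X; [|lra].
    apply childb_spec in X as [Hc0 <-].
    unfold weight. rewrite survival_child by auto. unfold Rdiv; lra. }
  rewrite E. unfold weight.
  pose proof (load_pos w Hw). pose proof (survival_pos w Hw).
  pose proof (nflows_le_load w Hw). pose proof (nflows_ge1 w Hw).
  destruct (Req_dec (load w) (nflows w)) as [Eq|Neq].
  - replace P with 0 by lra. rewrite Rmult_0_l, Rminus_0_r.
    apply Rlt_le, Rdiv_lt_0_compat; auto.
  - assert (Hk : 1 - kappa w = (load w - nflows w) / load w) by (rewrite kappa_eq; field; lra).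
    rewrite Hk.
    enough (P * / ((load w - nflows w) / load w * survival w) <= load w / survival w) by lra.
    apply Rle_trans with ((load w - nflows w) * / ((load w - nflows w) / load w * survival w)).
    + apply Rmult_le_compat_r; auto. apply Rlt_le, Rinv_0_lt_compat.
      apply Rmult_lt_0_compat; auto. apply Rdiv_lt_0_compat; lra.
    + apply Req_le. field. repeat split; lra.
Qed.

Lemma sum_by_beam g : sumL (seq 0 K) g = sumL verts (fun v => sumL (flows_of K b v) g).
Proof.
  unfold flows_of.
  rewrite (sumL_ext verts _ (fun v => sumL (seq 0 K) (fun k => if Nat.eqb (b k) v then g k else 0)))
    by (intros; apply sumL_filter).
  rewrite sumL_swap. apply sumL_ext. intros k Hk. apply in_seq in Hk.
  rewrite (sumL_ext verts _ (fun v => if Nat.eqb v (b k) then g k else 0))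
    by (intros v _; rewrite Nat.eqb_sym; auto).
  symmetry. apply (sumL_single verts (b k) (fun _ => g k) (verts_nodup N)), in_verts, Hb. lia.
Qed.

Lemma sumL_flows_of (v : nat) (f : nat -> R) :
  sumL (flows_of K b v) (fun k => f (b k)) = nflows v * f v.
Proof.
  rewrite (sumL_ext _ _ (fun _ => f v)), sumL_const; [reflexivity|].
  intros k Hk. apply filter_In in Hk as [_ Hk]. apply Nat.eqb_eq in Hk. rewrite Hk; auto.
Qed.

Lemma sum_nflows : sumL verts nflows = INR K.
Proof.
  pose proof (sum_by_beam (fun _ => 1)) as E. rewrite sumL_const, length_seq in E.
  rewrite (sumL_ext verts _ nflows) in E; [lra|].
  intros v _. rewrite (sumL_flows_of v (fun _ => 1)). lra.
Qed.

Lemma weight_root : weight 0%nat = INR K.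
Proof.
  destruct Htree as [HN _].
  assert (Hs : survival 0%nat = 1).
  { rewrite survival_eq, (prodL_ext _ _ (fun _ => 1)); [apply prodL_one|].
    intros a _. destruct (ancb N par a 0) eqn:E; auto. exfalso.
    apply (ancb_spec N par Htree a 0 HN) in E. eapply not_anc_root; eauto. }
  assert (Hl : load 0%nat = INR K).
  { rewrite load_eq, <- sum_nflows. apply sumL_ext. intros u Hu. apply in_verts in Hu.
    rewrite cdescb_root; auto. }
  unfold weight. rewrite Hs, Hl. field.
Qed.

Lemma gstar_convZ : in_convZ N par gstar.
Proof. apply (first_hit_convZ N par Htree). intros y Hy. pose proof (kappa_bounds y Hy). lra. Qed.

Lemma dstar_Delta : in_Delta N K b dstar.
Proof.
  split.
  - intros k Hk. unfold delta_star. fold (nflows (b k)).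
    pose proof (nflows_ge1 (b k) (Hb k Hk)). split.
    + apply Rlt_le, Rdiv_lt_0_compat; lra.
    + apply Rmult_le_reg_r with (nflows (b k)); [lra|].
      unfold Rdiv. rewrite Rmult_assoc, Rinv_l; lra.
  - intros v Hv. pose proof (nflows_ge1 v Hv).
    change (sumL (flows_of K b v) (fun k => 1 / nflows (b k)) = 1).
    rewrite (sumL_flows_of v (fun u => 1 / nflows u)). field. lra.
Qed.

Lemma star_finite r : (forall k, (k < K)%nat -> 0 < r k) -> finite_obj K b r gstar dstar.
Proof.
  intros Hr k Hk. pose proof (gstar_pos (b k) (Hb k Hk)). pose proof (nflows_ge1 (b k) (Hb k Hk)).
  unfold delta_star. fold (nflows (b k)).
  apply Rmult_lt_0_compat; [apply Rmult_lt_0_compat; auto|]. apply Rdiv_lt_0_compat; lra.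
Qed.


Lemma finite_obj_pos r g d : (forall k, (k < K)%nat -> 0 < r k) ->
  feasible N K par b g d -> finite_obj K b r g d ->
  forall k, (k < K)%nat -> 0 < g (b k) /\ 0 < d k.
Proof.
  intros Hr [Hg [Hd _]] Hf k Hk. specialize (Hf k Hk).
  pose proof (convZ_nonneg N par g Hg (b k) (Hb k Hk)) as Hg0. pose proof (Hd k Hk) as Hd0.
  pose proof (Hr k Hk). split.
  - destruct (Rle_lt_or_eq_dec 0 _ Hg0) as [|E]; auto. rewrite <- E in Hf. lra.
  - destruct (Rle_lt_or_eq_dec 0 _ (proj1 Hd0)) as [|E]; auto. rewrite <- E in Hf. lra.
Qed.

Definition gamma_ratio (g : nat -> R) k := g (b k) / gstar (b k).
Definition delta_scaled (d : nat -> R) k := d k * nflows (b k).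

Lemma ratio_scaled_pos r g d : (forall k, (k < K)%nat -> 0 < r k) ->
  feasible N K par b g d -> finite_obj K b r g d ->
  forall k, In k (seq 0 K) -> 0 < gamma_ratio g k /\ 0 < delta_scaled d k.
Proof.
  intros Hr Hfeas Hf k Hk. apply in_seq in Hk. assert (Hk' : (k < K)%nat) by lia.
  destruct (finite_obj_pos r g d Hr Hfeas Hf k Hk') as [Hg Hd].
  pose proof (gstar_pos (b k) (Hb k Hk')). pose proof (nflows_ge1 (b k) (Hb k Hk')).
  split; [apply Rdiv_lt_0_compat|apply Rmult_lt_0_compat]; lra.
Qed.

Lemma objective_gap r g d : (forall k, (k < K)%nat -> 0 < r k) ->
  feasible N K par b g d -> finite_obj K b r g d ->
  objective K b r g d - objective K b r gstar dstar =
  sumL (seq 0 K) (fun k => ln (gamma_ratio g k)) + sumL (seq 0 K) (fun k => ln (delta_scaled d k)).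
Proof.
  intros Hr Hfeas Hf. unfold objective. change (sumR ?l ?f) with (sumL l f).
  rewrite <- sumL_plus, <- sumL_minus.
  apply sumL_ext. intros k Hk.
  destruct (ratio_scaled_pos r g d Hr Hfeas Hf k Hk) as [Ha Hs].
  apply in_seq in Hk. assert (Hk' : (k < K)%nat) by lia.
  pose proof (star_finite r Hr k Hk'). pose proof (gstar_pos (b k) (Hb k Hk')).
  pose proof (nflows_ge1 (b k) (Hb k Hk')).
  replace (r k * g (b k) * d k)
    with (r k * gstar (b k) * dstar k * gamma_ratio g k * delta_scaled d k).
  - rewrite (ln_mult _ (delta_scaled d k)), (ln_mult _ (gamma_ratio g k));
      auto using Rmult_lt_0_compat. lra.
  - unfold gamma_ratio, delta_scaled, delta_star. fold (nflows (b k)). field. lra.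
Qed.

Lemma sum_gamma_ratio_le g : in_convZ N par g -> sumL (seq 0 K) (gamma_ratio g) <= INR K.
Proof.
  intros Hg. unfold gamma_ratio. rewrite sum_by_beam.
  rewrite (sumL_ext verts _ (fun v => g v * weight v)).
  - rewrite <- weight_root. apply (convZ_sum_le N par Htree); auto. apply weight_excess_nonneg.
  - intros v Hv. apply in_verts in Hv.
    rewrite (sumL_flows_of v (fun u => g u / gstar u)), <- weight_eq by auto. unfold Rdiv. lra.
Qed.

Lemma sum_delta_scaled d : in_Delta N K b d -> sumL (seq 0 K) (delta_scaled d) = INR K.
Proof.
  intros [_ Hd]. unfold delta_scaled. rewrite sum_by_beam, <- sum_nflows.
  apply sumL_ext. intros v Hv. apply in_verts in Hv.
  rewrite (sumL_ext _ _ (fun k => nflows v * d k)), sumL_scal.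
  - specialize (Hd v Hv). rewrite sumR_sumL in Hd. rewrite Hd. lra.
  - intros k Hk. apply filter_In in Hk as [_ Hk]. apply Nat.eqb_eq in Hk. rewrite Hk. lra.
Qed.

Section Gap.
Variables (r g d : nat -> R).
Hypothesis Hr : forall k, (k < K)%nat -> 0 < r k.
Hypothesis Hfeas : feasible N K par b g d.
Hypothesis Hfin : finite_obj K b r g d.

Let A := sumL (seq 0 K) (fun k => ln (gamma_ratio g k)).
Let D := sumL (seq 0 K) (fun k => ln (delta_scaled d k)).

Lemma gap_terms_le : A <= sumL (seq 0 K) (gamma_ratio g) - INR K /\
  D <= sumL (seq 0 K) (delta_scaled d) - INR K.
Proof.
  split; (eapply Rle_trans; [apply sumL_ln_le|rewrite length_seq; lra]);
    intros k Hk; apply (ratio_scaled_pos r g d Hr Hfeas Hfin k Hk).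
Qed.

Lemma objective_le_star : objective K b r g d <= objective K b r gstar dstar.
Proof.
  pose proof (objective_gap r g d Hr Hfeas Hfin) as Gap. fold A D in Gap.
  pose proof gap_terms_le.
  pose proof (sum_gamma_ratio_le g (proj1 Hfeas)). pose proof (sum_delta_scaled d (proj2 Hfeas)).
  lra.
Qed.

Lemma objective_ge_star_eq : objective K b r gstar dstar <= objective K b r g d ->
  (forall k, In k (seq 0 K) -> gamma_ratio g k = 1) /\
  (forall k, In k (seq 0 K) -> delta_scaled d k = 1).
Proof.
  intros Hge. pose proof (objective_gap r g d Hr Hfeas Hfin) as Gap. fold A D in Gap.
  pose proof gap_terms_le.
  pose proof (sum_gamma_ratio_le g (proj1 Hfeas)). pose proof (sum_delta_scaled d (proj2 Hfeas)).
  split; apply sumL_ln_eq; try (intros k Hk; apply (ratio_scaled_pos r g d Hr Hfeas Hfin k Hk));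
    rewrite length_seq; fold A D; lra.
Qed.

End Gap.

Lemma optimum_unique r g d : (forall k, (k < K)%nat -> 0 < r k) ->
  feasible N K par b g d -> finite_obj K b r g d ->
  objective K b r gstar dstar <= objective K b r g d ->
  (forall v, (v < N)%nat -> g v = gstar v) /\ (forall k, (k < K)%nat -> d k = dstar k).
Proof.
  intros Hr Hfeas Hfin Hge.
  destruct (objective_ge_star_eq r g d Hr Hfeas Hfin Hge) as [Ha Hd].
  split.
  - intros v Hv. pose proof (Hn v Hv) as Hnv. unfold nv in Hnv.
    destruct (flows_of K b v) as [|k l] eqn:E; simpl in Hnv; [lia|].
    assert (Hk : In k (flows_of K b v)) by (rewrite E; left; auto).
    apply filter_In in Hk as [Hk Hbk]. apply Nat.eqb_eq in Hbk.
    specialize (Ha k Hk). unfold gamma_ratio in Ha. rewrite Hbk in Ha.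
    pose proof (gstar_pos v Hv). apply Rmult_eq_reg_r with (/ gstar v).
    + unfold Rdiv in Ha. rewrite Ha, Rinv_r; lra.
    + apply Rinv_neq_0_compat; lra.
  - intros k Hk. assert (Hin : In k (seq 0 K)) by (apply in_seq; lia).
    specialize (Hd k Hin). unfold delta_scaled in Hd. unfold delta_star. fold (nflows (b k)).
    pose proof (nflows_ge1 (b k) (Hb k Hk)). apply Rmult_eq_reg_r with (nflows (b k)); [|lra].
    rewrite Hd. field. lra.
Qed.

Lemma star_optimal r : (forall k, (k < K)%nat -> 0 < r k) -> is_optimal N K par b r gstar dstar.
Proof.
  intros Hr. split; [split; [apply gstar_convZ|apply dstar_Delta]|split; [apply star_finite; auto|]].
  intros g d Hfeas Hfin. apply objective_le_star; auto.
Qed.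

Lemma is_optimal_ext r g d g' d' :
  (forall v, (v < N)%nat -> g' v = g v) -> (forall k, (k < K)%nat -> d' k = d k) ->
  is_optimal N K par b r g d -> is_optimal N K par b r g' d'.
Proof.
  intros Eg Ed [[[l [Hl1 [Hl2 Hl3]]] [Hd1 Hd2]] [Hfin Hmax]].
  assert (Eobj : objective K b r g' d' = objective K b r g d).
  { apply sumL_ext. intros k Hk. apply in_seq in Hk. rewrite Eg, Ed by (try apply Hb; lia). auto. }
  split; [split; [|split]|split].
  - exists l. repeat split; auto. intros v Hv. rewrite Eg by auto. apply Hl3; auto.
  - intros k Hk. rewrite Ed by auto. apply Hd1; auto.
  - intros v Hv. rewrite <- (Hd2 v Hv). apply sumL_ext. intros k Hk.
    apply filter_In in Hk as [Hk _]. apply in_seq in Hk. apply Ed; lia.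
  - intros k Hk. rewrite Eg, Ed by auto. apply Hfin; auto.
  - intros g'' d'' Hf'' Hfin''. rewrite Eobj. apply Hmax; auto.
Qed.

End Optimum.

Theorem mainTheorem3 (N K : nat) (par b : nat -> nat) (r : nat -> R)
  (Htree : is_rooted_tree N par)
  (Hb : forall k, (k < K)%nat -> (b k < N)%nat)
  (Hr : forall k, (k < K)%nat -> 0 < r k)
  (Hn : forall v, (v < N)%nat -> (1 <= nv K b v)%nat) :
  forall gamma delta : nat -> R,
    is_optimal N K par b r gamma delta <->
    ((forall v, (v < N)%nat -> gamma v = gamma_star N K par b v) /\
     (forall k, (k < K)%nat -> delta k = delta_star K b k)).
Proof.
  intros g d. split.
  - intros [Hfeas [Hfin Hmax]].
    destruct (star_optimal N K par b Htree Hb Hn r Hr) as [Hsfeas [Hsfin _]].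
    apply (optimum_unique N K par b Htree Hb Hn r); auto.
  - intros [Eg Ed]. apply (is_optimal_ext N K par b Hb r _ _ g d Eg Ed).
    apply star_optimal; auto.
Qed.
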